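(* Let $W$ be the complement of the right-handed Whitehead link with its standard ideal triangulation $\mathcal{T}_W$ by four ideal tetrahedra $\sigma_0,\dots,\sigma_3$, and let normal $Q$-coordinates be ordered as $(q_0,q_0',q_0'',q_1,q_1',q_1'',q_2,q_2',q_2'',q_3,q_3',q_3'')\in\mathbb{R}^{12}$. Define linear functionals $$\nu(\mathcal{M}_0)=q_1-q_1''+q_2'-q_2''-q_3+q_3',\qquad \nu(\mathcal{L}_0^t)=-2q_1'+2q_1''-2q_2'+2q_2'',$$ $$\nu(\mathcal{M}_1)=q_0-q_0'-q_1'+q_1''-q_3+q_3'',\qquad \nu(\mathcal{L}_1^t)=-2q_0'+2q_0''-2q_2'+2q_2'',$$ and for $N\in\mathbb{R}^{12}$ let $\beta(N)=(\nu(\mathcal{L}_0^t)(N),-\nu(\mathcal{M}_0)(N),\nu(\mathcal{L}_1^t)(N),-\nu(\mathcal{M}_1)(N))$. Let $V_1,V_2,V_3,V_4\in\mathbb{R}^{12}$ be the vectors whose only nonzero coordinates are equal to $1$ and are, respectively, $\{q_0,q_2\}$, $\{q_1,q_2\}$, $\{q_1,q_3\}$, $\{q_0,q_3\}$. Let $S,S'$ be embedded spun-normal surfaces in $W$ with respect to $\mathcal{T}_W$, with normal $Q$-coordinates $N(S),N(S')$. If $N(S)$ is not a nonnegative linear combination of $V_1,V_2,V_3,V_4$ and $\beta(N(S))=\beta(N(S'))$, then $N(S)=N(S')$; that is, $S$ is uniquely determined (up to normal isotopy and adding or removing vertex-linking components) by its transversely oriented boundary curves.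
   Context: $\mathcal{T}_W$ is the four-tetrahedron ideal triangulation of $W$ obtained by subdividing an ideal octahedron (triangulation m129:#2 of Regina's cusped census); $W$ has two cusps, cusp 0 and cusp 1, with meridians $\mathcal{M}_i$ and null-homologous longitudes $\mathcal{L}_i^t$. A (spun-)normal surface meets each ideal tetrahedron in normal triangles and quadrilaterals, possibly infinitely many triangles near the cusps. For each tetrahedron $\sigma_i$ the three quadrilateral types are $q_i,q_i',q_i''$, separating its vertices as $01/23$, $03/12$, $02/13$ respectively; $N(S)(q)$ counts quadrilaterals of type $q$ in $S$. The normal $Q$-coordinates of embedded spun-normal surfaces are exactly the integer vectors $N\ge 0$ that are admissible (in each tetrahedron at most one of the three quadrilateral coordinates is nonzero) and satisfy the $Q$-matching equations, which for $\mathcal{T}_W$ are equivalent to $$0=q_0'-q_0''+q_1'-q_1''+q_2'-q_2''+q_3'-q_3'',\qquad 0=q_0-q_0'+q_1-q_1'-q_2+q_2'-q_3+q_3';$$ and $N(S)$ determines $S$ up to normal isotopy and adding or removing vertex-linking surfaces (normal surfaces made of triangles only). The vector $\beta(N(S))$ records the signed intersection numbers of $S$ with the peripheral curves, i.e.\ the transversely oriented boundary curves of $S$. The nonnegative combinations of $V_1,\dots,V_4$ projectivise to the ''centre square'' of the projective admissible solution space. *)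

From mathcomp Require Import all_boot all_order all_algebra.
From mathcomp Require Import reals.
Set Implicit Arguments. Unset Strict Implicit. Unset Printing Implicit Defensive.
Import Order.TTheory GRing.Theory Num.Theory.
Local Open Scope ring_scope.

Definition qI (k : nat) : 'I_12 := inord (3 * k).
Definition qI' (k : nat) : 'I_12 := inord (3 * k + 1).
Definition qI'' (k : nat) : 'I_12 := inord (3 * k + 2).

Section Coords.
Variable (T : Type).
Definition q (N : 'rV[T]_12) k := N ord0 (qI k).
Definition q' (N : 'rV[T]_12) k := N ord0 (qI' k).
Definition q'' (N : 'rV[T]_12) k := N ord0 (qI'' k).
End Coords.

Definition nuM0 (N : 'rV[int]_12) : int :=
  q N 1 - q'' N 1 + q' N 2 - q'' N 2 - q N 3 + q' N 3.
Definition nuL0 (N : 'rV[int]_12) : int :=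
  - 2 * q' N 1 + 2 * q'' N 1 - 2 * q' N 2 + 2 * q'' N 2.
Definition nuM1 (N : 'rV[int]_12) : int :=
  q N 0 - q' N 0 - q' N 1 + q'' N 1 - q N 3 + q'' N 3.
Definition nuL1 (N : 'rV[int]_12) : int :=
  - 2 * q' N 0 + 2 * q'' N 0 - 2 * q' N 2 + 2 * q'' N 2.

Definition beta (N : 'rV[int]_12) : int * int * int * int :=
  (nuL0 N, - nuM0 N, nuL1 N, - nuM1 N).

Definition admissible (N : 'rV[int]_12) : Prop :=
  forall k : 'I_4,
    [|| (q N k == 0) && (q' N k == 0),
        (q N k == 0) && (q'' N k == 0)
      | (q' N k == 0) && (q'' N k == 0)].

Definition Q_matching (N : 'rV[int]_12) : Prop :=
  q' N 0 - q'' N 0 + q' N 1 - q'' N 1 + q' N 2 - q'' N 2 + q' N 3 - q'' N 3 = 0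
  /\ q N 0 - q' N 0 + q N 1 - q' N 1 - q N 2 + q' N 2 - q N 3 + q' N 3 = 0.

(* Normal Q-coordinates of an embedded spun-normal surface in W w.r.t. T_W:
   nonnegative, admissible integer solutions of the Q-matching equations. *)
Definition spun_normal_Q (N : 'rV[int]_12) : Prop :=
  (forall i : 'I_12, 0 <= N ord0 i) /\ admissible N /\ Q_matching N.

(* V_1..V_4 (indexed 0..3): supports {q0,q2}, {q1,q2}, {q1,q3}, {q0,q3} *)
Definition Vsupp (j : 'I_4) : 'I_12 * 'I_12 :=
  match nat_of_ord j with
  | 0 => (qI 0, qI 2)
  | 1 => (qI 1, qI 2)
  | 2 => (qI 1, qI 3)
  | _ => (qI 0, qI 3)
  end.

Definition V (R : nzRingType) (j : 'I_4) : 'rV[R]_12 :=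
  \row_i (((i == (Vsupp j).1) || (i == (Vsupp j).2))%:R).

Definition in_centre_cone (R : realType) (N : 'rV[int]_12) : Prop :=
  exists a : 'I_4 -> R, (forall j, 0 <= a j) /\
    map_mx (fun z : int => z%:~R) N = \sum_(j < 4) a j *: V R j.

From mathcomp Require Import all_boot all_order all_algebra.
From mathcomp Require Import reals zify.
Import Order.TTheory GRing.Theory Num.Theory.

(* An admissible nonnegative triple (q, q', q'') is determined by d = q' - q''
   and p = q - q', and in the coordinates (p_k, d_k) both the Q-matching
   equations and beta are linear: two solutions with the same beta differ by
   w(1,1,1,1) in p and by e(1,1,-1,-1) in d.  If e <> 0, say e > 0 after
   exchanging the two solutions, then in each tetrahedron the sign of w forces
   the sign of p or of d on one side, and these signs contradict the second
   matching equation (w <> 0) or the first one (w = 0).  Hence e = 0, so q' and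
   q'' agree and q is shifted by the constant w; if w <> 0, no tetrahedron of N
   carries a q' or q'' quadrilateral, i.e. N lies in the centre cone. *)

Set Implicit Arguments.
Unset Strict Implicit.
Unset Printing Implicit Defensive.

Local Open Scope ring_scope.

Lemma qI_val k : (k < 4)%N -> qI k = (3 * k)%N :> nat.
Proof. by move=> lt_k4; rewrite /qI inordK //; lia. Qed.

Lemma qI'_val k : (k < 4)%N -> qI' k = (3 * k + 1)%N :> nat.
Proof. by move=> lt_k4; rewrite /qI' inordK //; lia. Qed.

Lemma qI''_val k : (k < 4)%N -> qI'' k = (3 * k + 2)%N :> nat.
Proof. by move=> lt_k4; rewrite /qI'' inordK //; lia. Qed.

Lemma eq_qI k m : (k < 4)%N -> (m < 4)%N -> (qI k == qI m) = (k == m).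
Proof. by move=> lt_k4 lt_m4; rewrite -val_eqE /= !qI_val //; lia. Qed.

Lemma eq_qI'_qI k m : (k < 4)%N -> (m < 4)%N -> (qI' k == qI m) = false.
Proof. by move=> lt_k4 lt_m4; rewrite -val_eqE /= qI_val // qI'_val //; lia. Qed.

Lemma eq_qI''_qI k m : (k < 4)%N -> (m < 4)%N -> (qI'' k == qI m) = false.
Proof. by move=> lt_k4 lt_m4; rewrite -val_eqE /= qI_val // qI''_val //; lia. Qed.

Lemma ord12_cases (i : 'I_12) :
  [\/ i = qI (i %/ 3), i = qI' (i %/ 3) | i = qI'' (i %/ 3)].
Proof.
have lt_i12 := ltn_ord i; have : (i %% 3 < 3)%N by rewrite ltn_mod.
case: (ltnP (i %% 3) 1) => [mod0 | mod_ge1] _; [apply: Or31 | ].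
  by apply/val_inj; rewrite /= qI_val; lia.
case: (ltnP (i %% 3) 2) => [mod1 | mod2]; [apply: Or32 | apply: Or33];
  by apply/val_inj; rewrite /= ?qI'_val ?qI''_val; lia.
Qed.

Lemma row12_eq (T : Type) (X Y : 'rV[T]_12) :
  (forall k, (k < 4)%N -> [/\ q X k = q Y k, q' X k = q' Y k & q'' X k = q'' Y k]) ->
  X = Y.
Proof.
move=> eqXY; apply/rowP => i.
have [eq_q eq_q' eq_q''] : [/\ q X (i %/ 3) = q Y (i %/ 3), q' X (i %/ 3) = q' Y (i %/ 3)
   & q'' X (i %/ 3) = q'' Y (i %/ 3)] by apply: eqXY; have := ltn_ord i; lia.
by case: (ord12_cases i) => ->.
Qed.

Definition adm_triple (a b c : int) :=
  [&& 0 <= a, 0 <= b, 0 <= c &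
      [|| (a == 0) && (b == 0), (a == 0) && (c == 0) | (b == 0) && (c == 0)]].

Lemma adm_triple_spun N k :
  spun_normal_Q N -> (k < 4)%N -> adm_triple (q N k) (q' N k) (q'' N k).
Proof.
by move=> [N_ge0 [admN _]] lt_k4; rewrite /adm_triple !N_ge0; apply: (admN (Ordinal lt_k4)).
Qed.

Lemma adm_triple_eq (a b c x y z : int) :
  adm_triple a b c -> adm_triple x y z -> b - c = y - z -> b = y /\ c = z.
Proof. rewrite /adm_triple; lia. Qed.

Lemma adm_triple_quad0 (a b c : int) : adm_triple a b c -> a != 0 -> b = 0 /\ c = 0.
Proof. rewrite /adm_triple; lia. Qed.

Section Raise.

Variables (a b c x y z e w : int).
Hypotheses (low : adm_triple a b c) (up : adm_triple x y z) (e_gt0 : 0 < e).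
Hypotheses (raise_d : y - z = b - c + e) (raise_p : x - y = a - b + w).

Lemma raise_gt0 : 0 < w -> a - b = 0.
Proof. by move: low up; rewrite /adm_triple; lia. Qed.

Lemma raise_lt0 : w < 0 -> x - y < 0.
Proof. by move: low up; rewrite /adm_triple; lia. Qed.

Lemma raise_eq0 : w = 0 -> y - z <= 0.
Proof. by move: low up; rewrite /adm_triple; lia. Qed.

End Raise.

Definition dcoord (N : 'rV[int]_12) k := q' N k - q'' N k.
Definition pcoord (N : 'rV[int]_12) k := q N k - q' N k.

Definition shifted (N N' : 'rV[int]_12) (e w : int) :=
  forall k, (k < 4)%N ->
    dcoord N' k = dcoord N k + (if (k < 2)%N then e else - e) /\
    pcoord N' k = pcoord N k + w.

Lemma shifted_sym N N' e w : shifted N N' e w -> shifted N' N (- e) (- w).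
Proof.
move=> sh k /sh[]; rewrite /dcoord /pcoord => -> ->.
by case: ifP => _; split; lia.
Qed.

Lemma same_beta_shifted N N' :
  Q_matching N -> Q_matching N' -> beta N = beta N' ->
  shifted N N' (dcoord N' 0 - dcoord N 0) (pcoord N' 0 - pcoord N 0).
Proof.
move=> [m1 m2] [m1' m2'] [L0 M0 L1 M1].
move: L0 M0 L1 M1; rewrite /nuL0 /nuM0 /nuL1 /nuM1 /shifted /dcoord /pcoord.
by move=> L0 M0 L1 M1 [|[|[|[|k]]]] //= _; lia.
Qed.

Lemma no_positive_shift N N' e w :
  spun_normal_Q N -> spun_normal_Q N' -> shifted N N' e w -> ~ 0 < e.
Proof.
move=> spN spN' sh e_gt0.
have [[_ [_ [m1 m2]]] [_ [_ [m1' m2']]]] := (spN, spN').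
have sh01 k : (k < 2)%N -> dcoord N' k = dcoord N k + e /\ pcoord N' k = pcoord N k + w.
  by move=> lt_k2; have := sh k; rewrite lt_k2; apply; lia.
have sh23 k : (2 <= k < 4)%N -> dcoord N k = dcoord N' k + e /\ pcoord N k = pcoord N' k - w.
  move=> /andP[ge_k2 lt_k4]; have [] := sh k lt_k4.
  by rewrite ltnNge ge_k2 /dcoord /pcoord /= => d_k p_k; split; lia.
have adm k (lt_k4 : (k < 4)%N) := (adm_triple_spun spN lt_k4, adm_triple_spun spN' lt_k4).
have [[d0 p0] [d1 p1]] := (sh01 0%N isT, sh01 1%N isT).
have [[d2 p2] [d3 p3]] := (sh23 2%N isT, sh23 3%N isT).
have [[a0 a0'] [a1 a1']] := (adm 0%N isT, adm 1%N isT).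
have [[a2 a2'] [a3 a3']] := (adm 2%N isT, adm 3%N isT).
rewrite /dcoord /pcoord in d0 p0 d1 p1 d2 p2 d3 p3.
case: (ltgtP w 0) => [w_lt0 | w_gt0 | w_eq0].
- have := raise_lt0 a0 a0' e_gt0 d0 p0 w_lt0; have := raise_lt0 a1 a1' e_gt0 d1 p1 w_lt0.
  have := raise_gt0 a2' a2 e_gt0 d2 p2; have := raise_gt0 a3' a3 e_gt0 d3 p3.
  rewrite oppr_gt0; lia.
- have := raise_gt0 a0 a0' e_gt0 d0 p0 w_gt0; have := raise_gt0 a1 a1' e_gt0 d1 p1 w_gt0.
  have := raise_lt0 a2' a2 e_gt0 d2 p2; have := raise_lt0 a3' a3 e_gt0 d3 p3.
  rewrite oppr_lt0; lia.
- have := raise_eq0 a0 a0' e_gt0 d0 p0 w_eq0; have := raise_eq0 a1 a1' e_gt0 d1 p1 w_eq0.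
  have := raise_eq0 a2' a2 e_gt0 d2 p2; have := raise_eq0 a3' a3 e_gt0 d3 p3.
  rewrite w_eq0 oppr0; lia.
Qed.

Lemma spun_shift0 N N' e w :
  spun_normal_Q N -> spun_normal_Q N' -> shifted N N' e w -> e = 0.
Proof.
move=> spN spN' sh; case: (ltgtP e 0) => // [e_lt0 | e_gt0].
  by case: (no_positive_shift spN' spN (shifted_sym sh)); rewrite oppr_gt0.
by case: (no_positive_shift spN spN' sh).
Qed.

(* The casts [:> int] fix the implicit type of [q] to the one used in
   [Q_matching], so that [lia] identifies the atoms [q N k]. *)
Lemma in_centre_cone_weights (R : realType) N (x1 x2 x3 x4 : int) :
  0 <= x1 -> 0 <= x2 -> 0 <= x3 -> 0 <= x4 ->
  q N 0 = x1 + x4 :> int -> q N 1 = x2 + x3 :> int ->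
  q N 2 = x1 + x2 :> int -> q N 3 = x3 + x4 :> int ->
  (forall k, (k < 4)%N -> q' N k = 0 /\ q'' N k = 0) ->
  in_centre_cone R N.
Proof.
move=> x1_ge0 x2_ge0 x3_ge0 x4_ge0 e0 e1 e2 e3 no_quads.
exists (fun j : 'I_4 => ([:: x1; x2; x3; x4]`_j)%:~R); split.
  by case=> [[|[|[|[|m]]]] lt_m4] //=; rewrite ler0z.
apply: row12_eq => k lt_k4; have [z' z''] := no_quads k lt_k4.
move: z' z'' e0 e1 e2 e3; rewrite /q /q' /q'' !mxE !summxE !big_ord_recr big_ord0 /= !mxE /=.
rewrite !big_ord0 !eq_qI'_qI // !eq_qI''_qI //= => -> -> e0 e1 e2 e3.
rewrite !mulr0 !addr0; split=> //.
case: k lt_k4 => [|[|[|[|//]]]] _; rewrite !eq_qI //= ?e0 ?e1 ?e2 ?e3 intrD;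
  by rewrite !(mulr1, mulr0, addr0, add0r).
Qed.

Lemma centre_cone_of_no_quads (R : realType) N :
  spun_normal_Q N -> (forall k, (k < 4)%N -> q' N k = 0 /\ q'' N k = 0) ->
  in_centre_cone R N.
Proof.
move=> [N_ge0 [_ [_ m2]]] no_quads.
have [[z0 _] [z1 _]] := (no_quads 0%N isT, no_quads 1%N isT).
have [[z2 _] [z3 _]] := (no_quads 2%N isT, no_quads 3%N isT).
have [q0_ge0 q1_ge0 q2_ge0 q3_ge0] : [/\ 0 <= q N 0, 0 <= q N 1, 0 <= q N 2 & 0 <= q N 3].
  by split; apply: N_ge0.
rewrite z0 z1 z2 z3 in m2.
have [le_q0q2 | lt_q2q0] := lerP (q N 0) (q N 2).
  apply: (@in_centre_cone_weights R N (q N 0) (q N 2 - q N 0) (q N 3) 0) => //; lia.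
by apply: (@in_centre_cone_weights R N (q N 2) 0 (q N 1) (q N 0 - q N 2)) => //; lia.
Qed.

Lemma unshifted_quads_eq N N' w :
  spun_normal_Q N -> spun_normal_Q N' -> shifted N N' 0 w ->
  forall k, (k < 4)%N -> [/\ q N' k = q N k + w, q' N' k = q' N k & q'' N' k = q'' N k].
Proof.
move=> spN spN' sh k lt_k4; have [d_k p_k] := sh k lt_k4.
have [eq_q' eq_q''] : q' N' k = q' N k /\ q'' N' k = q'' N k.
  apply: adm_triple_eq (adm_triple_spun spN' lt_k4) (adm_triple_spun spN lt_k4) _.
  by move: d_k; rewrite /dcoord oppr0 if_same addr0.
by split=> //; move: p_k; rewrite /pcoord eq_q'; lia.
Qed.

Lemma shifted_quads0 N N' w :
  spun_normal_Q N -> spun_normal_Q N' ->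
  (forall k, (k < 4)%N -> [/\ q N' k = q N k + w, q' N' k = q' N k & q'' N' k = q'' N k]) ->
  w != 0 -> forall k, (k < 4)%N -> q' N k = 0 /\ q'' N k = 0.
Proof.
move=> spN spN' same_quads w_neq0 k lt_k4.
have [eq_q eq_q' eq_q''] := same_quads k lt_k4.
have [tN tN'] := (adm_triple_spun spN lt_k4, adm_triple_spun spN' lt_k4).
rewrite eq_q' eq_q'' in tN'.
have [q_eq0 | q_neq0] := eqVneq (q N k) 0; last exact: adm_triple_quad0 tN q_neq0.
by apply: adm_triple_quad0 tN' _; rewrite eq_q q_eq0 add0r.
Qed.

Theorem mainTheorem5 (R : realType) (N N' : 'rV[int]_12) :
  spun_normal_Q N -> spun_normal_Q N' ->
  ~ in_centre_cone R N ->
  beta N = beta N' ->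
  N = N'.
Proof.
move=> spN spN' not_cone eq_beta.
have [[_ [_ matchN]] [_ [_ matchN']]] := (spN, spN').
move: (same_beta_shifted matchN matchN' eq_beta).
move: (dcoord N' 0 - _) (pcoord N' 0 - _) => e w sh.
have e0 := spun_shift0 spN spN' sh; rewrite e0 in sh.
have same_quads := unshifted_quads_eq spN spN' sh.
have w0 : w = 0.
  apply: contra_not_eq not_cone => w_neq0.
  exact/centre_cone_of_no_quads/(shifted_quads0 spN spN' same_quads).
apply: row12_eq => k /same_quads[eq_q eq_q' eq_q''].
by rewrite eq_q eq_q' eq_q'' w0 addr0.
Qed.
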